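(* Let $H$ be a group, $K\lneq H$, $\phi\in\operatorname{Aut}(H)$, $G=\langle H,t;\ tkt^{-1}=\phi(k),\ k\in K\rangle$. Let $g\in G$ and $x,y\in H$ satisfy $g^{-1}ytg=x^{-1}\phi(x)t$ and $g^{-1}hg=x^{-1}hx$ for all $h\in H$. Then $g\in K$. *)

Record Group := {
  carrier :> Type;
  gmul : carrier -> carrier -> carrier;
  gone : carrier;
  ginv : carrier -> carrier;
  gmul_assoc : forall a b c, gmul a (gmul b c) = gmul (gmul a b) c;
  gmul_one_l : forall a, gmul gone a = a;
  gmul_one_r : forall a, gmul a gone = a;
  gmul_inv_l : forall a, gmul (ginv a) a = gone;
  gmul_inv_r : forall a, gmul a (ginv a) = gone
}.

Arguments gmul {g}.
Arguments gone {g}.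
Arguments ginv {g}.

Definition is_hom (A B : Group) (f : A -> B) : Prop :=
  forall a b, f (gmul a b) = gmul (f a) (f b).

Definition is_aut (A : Group) (f : A -> A) : Prop :=
  is_hom A A f /\ (forall a b, f a = f b -> a = b) /\ (forall b, exists a, f a = b).

Definition is_subgroup (A : Group) (K : A -> Prop) : Prop :=
  K gone /\ (forall a b, K a -> K b -> K (gmul a b)) /\ (forall a, K a -> K (ginv a)).

Definition is_proper_subgroup (A : Group) (K : A -> Prop) : Prop :=
  is_subgroup A K /\ exists a, ~ K a.

(* (G, iota, t) is the HNN extension  < H, t ; t k t^-1 = phi(k), k in K >,
   characterised by the universal property of this presentation:
   iota : H -> G is a homomorphism, t satisfies the relations, and for every
   group L, homomorphism f : H -> L and s in L satisfying the relations there
   is a unique homomorphism F : G -> L with F o iota = f and F t = s. *)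
Definition is_HNN (H : Group) (K : H -> Prop) (phi : H -> H)
    (G : Group) (iota : H -> G) (t : G) : Prop :=
  is_hom H G iota /\
  (forall k, K k -> gmul (gmul t (iota k)) (ginv t) = iota (phi k)) /\
  (forall (L : Group) (f : H -> L) (s : L),
     is_hom H L f ->
     (forall k, K k -> gmul (gmul s (f k)) (ginv s) = f (phi k)) ->
     exists F : G -> L,
       (is_hom G L F /\ (forall h, F (iota h) = f h) /\ F t = s) /\
       (forall F' : G -> L, is_hom G L F' -> (forall h, F' (iota h) = f h) ->
          F' t = s -> forall g, F' g = F g)).

(* G acts on the left cosets of iota(H), which are represented by Britton
   normal forms: reduced words r1 t^e1 ... rn t^en whose letters r_i are fixed
   representatives modulo the associated subgroup crossing t^e_i.  The second
   hypothesis says g^-1 iota(H) g <= iota(H), so the coset g iota(H) is fixed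
   by iota(H); as K is proper, the only normal form fixed by all of H is the
   empty word, hence g = iota z.  The first hypothesis then puts t iota(z) t^-1
   in iota(H); but t iota(z) t^-1 sends the empty word to t rep(z) t^-1, which
   is empty only if z is in K. *)

From Stdlib Require Import List Bool Classical ClassicalEpsilon
  FunctionalExtensionality ProofIrrelevance PropExtensionality.
Import ListNotations.

Section GroupFacts.
Variable A : Group.
Implicit Types a b c : A.

Lemma gmulKg a b : gmul (ginv a) (gmul a b) = b.
Proof. rewrite gmul_assoc, gmul_inv_l, gmul_one_l. reflexivity. Qed.

Lemma gmulKVg a b : gmul a (gmul (ginv a) b) = b.
Proof. rewrite gmul_assoc, gmul_inv_r, gmul_one_l. reflexivity. Qed.

Lemma gmulgI a b c : gmul a b = gmul a c -> b = c.
Proof. intro E. rewrite <- (gmulKg a b), <- (gmulKg a c), E. reflexivity. Qed.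

Lemma ginv_uniq a b : gmul a b = gone -> b = ginv a.
Proof. intro E. apply (gmulgI a). rewrite E, gmul_inv_r. reflexivity. Qed.

Lemma ginvK a : ginv (ginv a) = a.
Proof. symmetry. apply ginv_uniq, gmul_inv_l. Qed.

Lemma ginvM a b : ginv (gmul a b) = gmul (ginv b) (ginv a).
Proof.
  symmetry. apply ginv_uniq.
  rewrite <- gmul_assoc, gmulKVg, gmul_inv_r. reflexivity.
Qed.

Lemma ginv1 : ginv (@gone A) = gone.
Proof. symmetry. apply ginv_uniq, gmul_one_l. Qed.

End GroupFacts.

Ltac gnorm := repeat progress (rewrite <- ?gmul_assoc, ?gmulKg, ?gmulKVg,
  ?gmul_inv_l, ?gmul_inv_r, ?gmul_one_l, ?gmul_one_r).

Lemma hom1 (A B : Group) (f : A -> B) : is_hom A B f -> f gone = gone.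
Proof.
  intro hf. apply (gmulgI B (f gone)). rewrite <- hf, !gmul_one_r. reflexivity.
Qed.

Lemma homV (A B : Group) (f : A -> B) : is_hom A B f -> forall a, f (ginv a) = ginv (f a).
Proof. intros hf a. apply ginv_uniq. rewrite <- hf, gmul_inv_r. apply hom1, hf. Qed.

Section Permutations.
Variable X : Type.

Record perm := mkperm {
  pf : X -> X;
  pinv : X -> X;
  pK : forall x, pinv (pf x) = x;
  pKV : forall x, pf (pinv x) = x }.

Lemma perm_ext (p q : perm) : (forall x, pf p x = pf q x) -> p = q.
Proof.
  destruct p as [f fi fK fKV], q as [g gi gK gKV]; simpl; intro E.
  assert (f = g) by (apply functional_extensionality; auto). subst g.
  assert (fi = gi).
  { apply functional_extensionality; intro x.
    transitivity (gi (f (fi x))); [now rewrite gK | now rewrite fKV]. }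
  subst gi. f_equal; apply proof_irrelevance.
Qed.

Definition perm_comp (p q : perm) : perm.
Proof.
  refine (mkperm (fun x => pf p (pf q x)) (fun x => pinv q (pinv p x)) _ _);
  intro x; now rewrite ?pK, ?pKV.
Defined.

Definition perm_id : perm := mkperm (fun x => x) (fun x => x) (fun _ => eq_refl) (fun _ => eq_refl).

Definition perm_inv (p : perm) : perm := mkperm (pinv p) (pf p) (pKV p) (pK p).

Definition Sym : Group.
Proof.
  refine {| carrier := perm; gmul := perm_comp; gone := perm_id; ginv := perm_inv |};
  intros; apply perm_ext; intros; simpl; auto using pK, pKV.
Defined.

End Permutations.

Arguments mkperm {X}. Arguments pf {X}. Arguments pinv {X}.

Lemma sig_ext {X : Type} {P : X -> Prop} (a b : {x | P x}) :
  proj1_sig a = proj1_sig b -> a = b.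
Proof.
  destruct a as [a pa], b as [b pb]; simpl; intro E; subst. f_equal; apply proof_irrelevance.
Qed.

Section Britton.
Variables (H : Group) (K : H -> Prop) (phi : H -> H).
Hypothesis hK : is_subgroup H K.
Hypothesis hphi : is_aut H phi.

Definition phiinv (b : H) : H := epsilon (inhabits gone) (fun a => phi a = b).

Lemma phiinvK b : phi (phiinv b) = b.
Proof. unfold phiinv. apply epsilon_spec, hphi. Qed.

Lemma phiK a : phiinv (phi a) = a.
Proof. apply (proj1 (proj2 hphi)). now rewrite phiinvK. Qed.

(* [a t^e = t^e (tconj e a)] for [a] in [assoc e]. *)
Definition assoc (e : bool) (a : H) : Prop :=
  if e then exists k, K k /\ a = phi k else K a.

Definition tconj (e : bool) (a : H) : H := if e then phiinv a else phi a.

Lemma assoc_subgroup e : is_subgroup H (assoc e).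
Proof.
  destruct hK as [k1 [km ki]]. destruct hphi as [hh _].
  destruct e; simpl; split; [|split| |split]; auto.
  - exists gone. split; auto. symmetry; now apply hom1.
  - intros a b [k [Kk ->]] [k' [Kk' ->]]. exists (gmul k k'). split; auto.
  - intros a [k [Kk ->]]. exists (ginv k). split; auto. symmetry; now apply homV.
Qed.

Lemma tconjM e a b :
  assoc e a -> assoc e b -> tconj e (gmul a b) = gmul (tconj e a) (tconj e b).
Proof.
  destruct e; simpl.
  - intros [k [_ ->]] [k' [_ ->]]. rewrite <- (proj1 hphi), !phiK. reflexivity.
  - intros; apply (proj1 hphi).
Qed.

Lemma assoc_tconj e a : assoc e a -> assoc (negb e) (tconj e a).
Proof.
  destruct e; simpl.
  - intros [k [Kk ->]]. now rewrite phiK.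
  - intros Ka. exists a; auto.
Qed.

Lemma tconj1 e : tconj e gone = gone.
Proof.
  destruct e; simpl.
  - rewrite <- (hom1 H H phi (proj1 hphi)) at 1. apply phiK.
  - apply hom1, hphi.
Qed.

Definition rep (e : bool) (g : H) : H :=
  epsilon (inhabits gone) (fun r => assoc e (gmul (ginv r) g) /\ (assoc e r -> r = gone)).

Lemma rep_spec e g :
  assoc e (gmul (ginv (rep e g)) g) /\ (assoc e (rep e g) -> rep e g = gone).
Proof.
  unfold rep. apply epsilon_spec.
  destruct (classic (assoc e g)) as [Ag|Ag].
  - exists gone. rewrite ginv1, gmul_one_l. auto.
  - exists g. rewrite gmul_inv_l. split; [apply assoc_subgroup | tauto].
Qed.

Lemma rep_assoc e a : assoc e a -> rep e a = gone.
Proof.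
  intro Aa. apply (proj2 (rep_spec e a)).
  destruct (assoc_subgroup e) as [_ [am ai]].
  replace (rep e a) with (gmul a (ginv (gmul (ginv (rep e a)) a)))
    by (rewrite ginvM, ginvK; gnorm; reflexivity).
  apply am, ai, rep_spec; auto.
Qed.

Lemma assoc_rep1 e a : rep e a = gone -> assoc e a.
Proof.
  intro E. generalize (proj1 (rep_spec e a)). now rewrite E, ginv1, gmul_one_l.
Qed.

Lemma rep_coset e g g' : assoc e (gmul (ginv g) g') -> rep e g = rep e g'.
Proof.
  intro Ag. unfold rep. f_equal. apply functional_extensionality. intro r.
  apply propositional_extensionality.
  destruct (assoc_subgroup e) as [_ [am ai]].
  split; intros [h1 h2]; split; auto.
  - replace (gmul (ginv r) g') with (gmul (gmul (ginv r) g) (gmul (ginv g) g'))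
      by (gnorm; reflexivity). auto.
  - replace (gmul (ginv r) g) with (gmul (gmul (ginv r) g') (ginv (gmul (ginv g) g')))
      by (rewrite ginvM, ginvK; gnorm; reflexivity). auto.
Qed.

Lemma rep_idem e g : rep e (rep e g) = rep e g.
Proof. apply rep_coset, rep_spec. Qed.

(* [(r1, e1) :: ... :: (rn, en)] stands for the coset [r1 t^e1 ... rn t^en iota(H)]. *)
Definition word : Type := list (H * bool).

Fixpoint lmul_word (h : H) (w : word) : word :=
  match w with
  | [] => []
  | (r, e) :: rest =>
      let r' := rep e (gmul h r) in
      (r', e) :: lmul_word (tconj e (gmul (ginv r') (gmul h r))) rest
  end.

Definition tmul_word (e : bool) (w : word) : word :=
  match w with
  | (r, e') :: rest =>
      if excluded_middle_informative (e' = negb e /\ r = gone) then rest else (gone, e) :: w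
  | [] => [(gone, e)]
  end.

Definition no_pinch (e : bool) (w : word) : Prop :=
  match w with
  | [] => True
  | (r, e') :: _ => ~ (e' = negb e /\ r = gone)
  end.

Fixpoint reduced (w : word) : Prop :=
  match w with
  | [] => True
  | (r, e) :: rest => rep e r = r /\ no_pinch e rest /\ reduced rest
  end.

Lemma lmul_wordM w h h' : lmul_word h (lmul_word h' w) = lmul_word (gmul h h') w.
Proof.
  revert h h'; induction w as [|[r e] rest IH]; intros h h'; simpl; auto.
  set (r1 := rep e (gmul h' r)).
  assert (E : rep e (gmul h r1) = rep e (gmul (gmul h h') r)).
  { apply rep_coset. rewrite ginvM. gnorm. apply rep_spec. }
  assert (A1 := proj1 (rep_spec e (gmul h' r))).
  assert (A2 := proj1 (rep_spec e (gmul h r1))).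
  rewrite E in A2 |- *. rewrite IH, <- tconjM by assumption.
  unfold r1. gnorm. reflexivity.
Qed.

Lemma lmul_word1 w : reduced w -> lmul_word gone w = w.
Proof.
  induction w as [|[r e] rest IH]; simpl; auto.
  intros [R [_ Rr]]. rewrite gmul_one_l, R, gmul_inv_l, tconj1, IH; auto.
Qed.

Lemma lmul_word_reduced w h : reduced w -> reduced (lmul_word h w).
Proof.
  revert h; induction w as [|[r e] rest IH]; intros h; simpl; auto.
  intros [R [N Rr]]. split; [apply rep_idem|]. split; [|apply IH; auto].
  destruct rest as [|[r1 e2] rest']; simpl; auto.
  intros [Ee Er]. apply N. split; auto.
  set (b := tconj e (gmul (ginv (rep e (gmul h r))) (gmul h r))) in *.
  assert (Ab : assoc e2 b) by (subst e2; apply assoc_tconj, rep_spec).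
  apply assoc_rep1 in Er.
  destruct (assoc_subgroup e2) as [_ [am ai]].
  destruct Rr as [R1 _]. rewrite <- R1. apply rep_assoc.
  replace r1 with (gmul (ginv b) (gmul b r1)) by apply gmulKg. auto.
Qed.

Lemma tmul_word_reduced e w : reduced w -> reduced (tmul_word e w).
Proof.
  assert (R1 : rep e gone = gone) by apply rep_assoc, assoc_subgroup.
  destruct w as [|[r e'] rest]; simpl; intro Rw.
  - repeat split; auto.
  - destruct (excluded_middle_informative (e' = negb e /\ r = gone)); simpl.
    + apply Rw.
    + auto.
Qed.

Lemma tmul_wordK e w : reduced w -> tmul_word (negb e) (tmul_word e w) = w.
Proof.
  destruct w as [|[r e'] rest]; simpl; intro Rw.
  - rewrite negb_involutive.
    destruct (excluded_middle_informative (e = e /\ gone = gone)); tauto.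
  - destruct (excluded_middle_informative (e' = negb e /\ r = gone)) as [[-> ->]|c]; simpl.
    + destruct Rw as [_ [N _]].
      destruct rest as [|[r1 e2] rest']; simpl; auto.
      destruct (excluded_middle_informative (e2 = negb (negb e) /\ r1 = gone)) as [c|c]; auto.
      contradiction.
    + rewrite negb_involutive.
      destruct (excluded_middle_informative (e = e /\ gone = gone)); tauto.
Qed.

Lemma lmul_word_relation k w :
  K k -> reduced w -> tmul_word true (lmul_word k (tmul_word false w)) = lmul_word (phi k) w.
Proof.
  intros Kk Rw.
  assert (Ak : assoc false k) by exact Kk.
  assert (Apk : assoc true (phi k)) by (exists k; auto).
  destruct w as [|[r e'] rest].
  - simpl. rewrite gmul_one_r, (rep_assoc false k Ak).
    destruct (excluded_middle_informative _) as [c|c]; auto. exfalso; apply c; auto.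
  - unfold tmul_word at 2.
    destruct (excluded_middle_informative (e' = negb false /\ r = gone)) as [[-> ->]|c];
      cbn [lmul_word negb];
      rewrite gmul_one_r, ?(rep_assoc false k Ak), ?(rep_assoc true (phi k) Apk), ginv1, gmul_one_l.
    + cbn [tconj]. rewrite phiK.
      simpl in Rw. destruct Rw as [_ [N Rr]].
      destruct rest as [|[r1 e2] rest']; simpl; auto.
      destruct (excluded_middle_informative _) as [[-> d]|d]; auto.
      exfalso. apply N. split; auto.
      apply assoc_rep1 in d. destruct hK as [_ [km ki]].
      destruct Rr as [R1 _]. rewrite <- R1. apply rep_assoc. simpl.
      replace r1 with (gmul (ginv k) (gmul k r1)) by apply gmulKg. auto.
    + simpl. destruct (excluded_middle_informative _) as [d|d]; auto.
      exfalso; apply d; auto.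
Qed.

Lemma fixed_word_nil (k0 : H) : ~ K k0 -> forall w, (forall h, lmul_word h w = w) -> w = [].
Proof.
  intros nk0 [|[r e] rest] Hfix; auto.
  set (a0 := if e then phi k0 else k0).
  assert (na0 : ~ assoc e a0).
  { unfold a0; destruct e; simpl; auto. intros [k [Kk E]].
    apply (proj1 (proj2 hphi)) in E. subst; auto. }
  specialize (Hfix (gmul r (gmul a0 (ginv r)))). simpl in Hfix. injection Hfix as E1 _.
  generalize (proj1 (rep_spec e (gmul (gmul r (gmul a0 (ginv r))) r))).
  rewrite E1. gnorm. contradiction.
Qed.

Definition normal_form : Type := {w : word | reduced w}.

Definition nf_nil : normal_form := exist reduced [] I.

Definition lmul_perm (h : H) : Sym normal_form.
Proof.
  refine (mkperm (fun w => exist _ (lmul_word h (proj1_sig w)) (lmul_word_reduced _ h (proj2_sig w)))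
                 (fun w => exist _ (lmul_word (ginv h) (proj1_sig w))
                                   (lmul_word_reduced _ (ginv h) (proj2_sig w))) _ _);
  intros [w Rw]; apply sig_ext; simpl;
  rewrite lmul_wordM, ?gmul_inv_l, ?gmul_inv_r, lmul_word1; auto.
Defined.

Definition tmul_perm (e : bool) : Sym normal_form.
Proof.
  refine (mkperm (fun w => exist _ (tmul_word e (proj1_sig w)) (tmul_word_reduced e _ (proj2_sig w)))
                 (fun w => exist _ (tmul_word (negb e) (proj1_sig w))
                                   (tmul_word_reduced (negb e) _ (proj2_sig w))) _ _);
  intros [w Rw]; apply sig_ext; simpl.
  - now apply tmul_wordK.
  - rewrite <- (negb_involutive e) at 1. now apply tmul_wordK.
Defined.

Lemma lmul_perm_hom : is_hom H (Sym normal_form) lmul_perm.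
Proof.
  intros a b. apply perm_ext. intros [w Rw]. apply sig_ext. simpl. now rewrite lmul_wordM.
Qed.

Lemma lmul_perm_relation k :
  K k -> gmul (gmul (tmul_perm true) (lmul_perm k)) (ginv (tmul_perm true)) = lmul_perm (phi k).
Proof.
  intro Kk. apply perm_ext. intros [w Rw]. apply sig_ext. simpl. now apply lmul_word_relation.
Qed.

End Britton.

Section Generation.
Variables (H : Group) (K : H -> Prop) (phi : H -> H) (G : Group) (iota : H -> G) (t : G).
Hypothesis hG : is_HNN H K phi G iota t.

Definition lmul_sum (g : G) : Sym (G + G).
Proof.
  refine (mkperm (fun x => match x with inl a => inl (gmul g a) | inr a => inr (gmul g a) end)
                 (fun x => match x with
                           | inl a => inl (gmul (ginv g) a) | inr a => inr (gmul (ginv g) a) end) _ _);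
  intros [a|a]; now rewrite ?gmulKg, ?gmulKVg.
Defined.

Lemma lmul_sum_hom : is_hom G (Sym (G + G)) lmul_sum.
Proof. intros a b. apply perm_ext. intros [x|x]; simpl; now rewrite gmul_assoc. Qed.

Definition swap_in (P : G -> Prop) (x : G + G) : G + G :=
  match x with
  | inl a => if excluded_middle_informative (P a) then inr a else inl a
  | inr a => if excluded_middle_informative (P a) then inl a else inr a
  end.

Lemma swap_inK P x : swap_in P (swap_in P x) = x.
Proof.
  destruct x as [a|a]; simpl; destruct (excluded_middle_informative (P a)); simpl;
  destruct (excluded_middle_informative (P a)); tauto.
Qed.

Definition swap_conj (P : G -> Prop) (p : Sym (G + G)) : Sym (G + G).
Proof.
  refine (mkperm (fun x => swap_in P (pf p (swap_in P x)))
                 (fun x => swap_in P (pinv p (swap_in P x))) _ _);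
  intro x; now rewrite swap_inK, ?pK, ?pKV, swap_inK.
Defined.

(* Conjugating the left-regular action of G on two copies of G by the swap
   along P gives a second extension of [iota] and [t]; by uniqueness it is the
   left-regular action itself, and comparing both on [inl 1] forces [P g]. *)
Lemma hnn_generated (P : G -> Prop) :
  (forall a b, P a -> P b -> P (gmul a b)) -> (forall a, P a -> P (ginv a)) ->
  (forall h, P (iota h)) -> P t -> forall g, P g.
Proof.
  intros Pm Pi Ph Pt g.
  destruct hG as [hi [hrel huniv]].
  assert (commute : forall u, P u -> swap_conj P (lmul_sum u) = lmul_sum u).
  { intros u Pu. apply perm_ext. intros [a|a]; simpl;
    destruct (excluded_middle_informative (P a)) as [pa|pa]; simpl;
    destruct (excluded_middle_informative (P (gmul u a))) as [pb|pb]; try reflexivity;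
    exfalso; [apply pb; now apply Pm | | apply pb; now apply Pm |];
    apply pa; rewrite <- (gmulKg G u a); auto. }
  assert (hL : is_hom H (Sym (G + G)) (fun h => lmul_sum (iota h))).
  { intros a b. rewrite hi. apply lmul_sum_hom. }
  destruct (huniv (Sym (G + G)) (fun h => lmul_sum (iota h)) (lmul_sum t) hL)
    as [F [_ Funiq]].
  { intros k Kk. rewrite <- (hrel k Kk), !lmul_sum_hom. f_equal.
    apply perm_ext. intros [x|x]; reflexivity. }
  assert (E := Funiq lmul_sum lmul_sum_hom (fun h => eq_refl) eq_refl g).
  rewrite <- (Funiq (fun g => swap_conj P (lmul_sum g))) in E.
  - assert (E' := f_equal (fun p => pf p (inl gone)) E). simpl in E'.
    destruct (excluded_middle_informative (P gone)) as [p1|p1].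
    + simpl in E'. rewrite gmul_one_r in E'.
      destruct (excluded_middle_informative (P g)); [assumption | discriminate].
    + exfalso. apply p1. rewrite <- (gmul_inv_r G t). auto.
  - intros a b. apply perm_ext. intro x. simpl. rewrite swap_inK.
    destruct (swap_in P x); now rewrite gmul_assoc.
  - intro h. apply commute, Ph.
  - apply commute, Pt.
Qed.

End Generation.

Section CosetAction.
Variables (H : Group) (K : H -> Prop) (phi : H -> H) (G : Group) (iota : H -> G) (t : G).
Hypothesis hK : is_subgroup H K.
Hypothesis hphi : is_aut H phi.
Hypothesis hG : is_HNN H K phi G iota t.

Definition tpow (e : bool) : G := if e then t else ginv t.

Fixpoint word_val (w : word H) : G :=
  match w with
  | [] => gone
  | (r, e) :: rest => gmul (iota r) (gmul (tpow e) (word_val rest))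
  end.

Lemma assoc_tpow e a :
  assoc H K phi e a -> gmul (iota a) (tpow e) = gmul (tpow e) (iota (tconj H phi e a)).
Proof.
  destruct hG as [_ [hrel _]].
  destruct e; simpl.
  - intros [k [Kk ->]]. rewrite phiK, <- (hrel k Kk) by assumption. gnorm. reflexivity.
  - intros Kk. rewrite <- (hrel a Kk). gnorm. reflexivity.
Qed.

Lemma word_val_lmul w h :
  exists h', gmul (iota h) (word_val w) = gmul (word_val (lmul_word H K phi h w)) (iota h').
Proof.
  assert (hi := proj1 hG).
  revert h; induction w as [|[r e] rest IH]; intro h; simpl.
  - exists h. now rewrite gmul_one_r, gmul_one_l.
  - set (r' := rep H K phi e (gmul h r)).
    set (a := gmul (ginv r') (gmul h r)).
    destruct (IH (tconj H phi e a)) as [h'' E]. exists h''.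
    assert (Aa : assoc H K phi e a) by apply (rep_spec H K phi hK hphi).
    assert (E1 : gmul (iota h) (iota r) = gmul (iota r') (iota a)).
    { rewrite <- !hi. f_equal. unfold a. gnorm. reflexivity. }
    rewrite <- !gmul_assoc, (gmul_assoc _ (iota h)), E1, <- gmul_assoc,
      (gmul_assoc _ (iota a)), (assoc_tpow e a Aa), <- gmul_assoc, E.
    reflexivity.
Qed.

Lemma word_val_tmul w : gmul t (word_val w) = word_val (tmul_word H true w).
Proof.
  assert (i1 : iota gone = gone) by apply hom1, hG.
  destruct w as [|[r e'] rest]; simpl.
  - rewrite i1. gnorm. reflexivity.
  - destruct (excluded_middle_informative (e' = false /\ r = gone)) as [[-> ->]|c];
      simpl; rewrite i1; gnorm; reflexivity.
Qed.

Section Action.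
Variable F : G -> Sym (normal_form H K phi).
Hypothesis hF : is_hom G _ F.
Hypothesis F_iota : forall h, F (iota h) = lmul_perm H K phi hK hphi h.
Hypothesis F_t : F t = tmul_perm H K phi hK hphi true.

Lemma word_val_action g w :
  exists h, gmul g (word_val (proj1_sig w)) = gmul (word_val (proj1_sig (pf (F g) w))) (iota h).
Proof.
  revert w; pattern g; apply (hnn_generated H K phi G iota t hG).
  - intros a b Pa Pb w. destruct (Pb w) as [hb Eb]. destruct (Pa (pf (F b) w)) as [ha Ea].
    exists (gmul ha hb). rewrite hF, (proj1 hG). simpl.
    rewrite <- gmul_assoc, Eb, gmul_assoc, Ea, gmul_assoc. reflexivity.
  - intros a Pa w. destruct (Pa (pf (F (ginv a)) w)) as [h E].
    assert (FF : pf (F a) (pf (F (ginv a)) w) = w).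
    { change (pf (gmul (F a) (F (ginv a))) w = w).
      rewrite <- hF, gmul_inv_r, (hom1 _ _ F hF). reflexivity. }
    rewrite FF in E. exists (ginv h).
    rewrite (homV _ _ iota (proj1 hG)). apply (gmulgI G a).
    rewrite gmulKVg, gmul_assoc, E. gnorm. reflexivity.
  - intros h w. rewrite F_iota. apply word_val_lmul.
  - intros w. exists gone. rewrite F_t, (hom1 _ _ iota (proj1 hG)), gmul_one_r.
    apply word_val_tmul.
Qed.

Lemma stab_nil_mem_base g : pf (F g) (nf_nil H K phi) = nf_nil H K phi -> exists z, g = iota z.
Proof.
  intro Fg. destruct (word_val_action g (nf_nil H K phi)) as [z Ez].
  rewrite Fg in Ez. simpl in Ez. rewrite gmul_one_r, gmul_one_l in Ez. eauto.
Qed.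

Lemma conj_base_stab_nil (k0 : H) g :
  ~ K k0 -> (forall h, exists h', gmul (gmul (ginv g) (iota h)) g = iota h') ->
  pf (F g) (nf_nil H K phi) = nf_nil H K phi.
Proof.
  intros nk0 conj_g. apply sig_ext.
  apply (fixed_word_nil H K phi hK hphi k0 nk0). intro h.
  destruct (conj_g h) as [h' E].
  assert (Eg : gmul (iota h) g = gmul g (iota h')) by (rewrite <- E; gnorm; reflexivity).
  change (proj1_sig (pf (lmul_perm H K phi hK hphi h) (pf (F g) (nf_nil H K phi)))
          = proj1_sig (pf (F g) (nf_nil H K phi))).
  rewrite <- F_iota.
  change (proj1_sig (pf (gmul (F (iota h)) (F g)) (nf_nil H K phi))
          = proj1_sig (pf (F g) (nf_nil H K phi))).
  rewrite <- hF, Eg, hF, F_iota.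
  change (proj1_sig (pf (F g) (pf (lmul_perm H K phi hK hphi h') (nf_nil H K phi)))
          = proj1_sig (pf (F g) (nf_nil H K phi))).
  do 3 f_equal. now apply sig_ext.
Qed.

(* [t z t^-1] sends the empty word to [t (rep false z) t^-1], which is
   reduced unless [rep false z = 1]. *)
Lemma act_tconj_base_K z h : gmul (gmul t (iota z)) (ginv t) = iota h -> K z.
Proof.
  intro E.
  assert (E' := f_equal (fun q => proj1_sig (pf (F q) (nf_nil H K phi))) E). simpl in E'.
  rewrite !hF, !F_iota, (homV _ _ F hF), F_t in E'. simpl in E'.
  destruct (excluded_middle_informative _) as [[_ R1]|_]; [|discriminate].
  rewrite gmul_one_r in R1. exact (assoc_rep1 H K phi hK hphi false z R1).
Qed.

End Action.

Lemma coset_action_exists :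
  exists F : G -> Sym (normal_form H K phi), is_hom G _ F /\
    (forall h, F (iota h) = lmul_perm H K phi hK hphi h) /\ F t = tmul_perm H K phi hK hphi true.
Proof.
  destruct hG as [_ [_ huniv]].
  destruct (huniv _ _ _ (lmul_perm_hom H K phi hK hphi) (lmul_perm_relation H K phi hK hphi))
    as [F [FP _]].
  eauto.
Qed.

Lemma conj_base_mem_base (k0 : H) g :
  ~ K k0 -> (forall h, exists h', gmul (gmul (ginv g) (iota h)) g = iota h') ->
  exists z, g = iota z.
Proof.
  intros nk0 conj_g. destruct coset_action_exists as [F [hF [F_iota F_t]]].
  apply (stab_nil_mem_base F hF F_iota F_t).
  exact (conj_base_stab_nil F hF F_iota k0 g nk0 conj_g).
Qed.

Lemma tconj_base_K z h : gmul (gmul t (iota z)) (ginv t) = iota h -> K z.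
Proof.
  destruct coset_action_exists as [F [hF [F_iota F_t]]].
  exact (act_tconj_base_K F hF F_iota F_t z h).
Qed.

End CosetAction.

Theorem lemma4p3 (H : Group) (K : H -> Prop) (phi : H -> H)
    (G : Group) (iota : H -> G) (t : G)
    (hK : is_proper_subgroup H K) (hphi : is_aut H phi)
    (hG : is_HNN H K phi G iota t)
    (g : G) (x y : H)
    (h1 : gmul (gmul (ginv g) (gmul (iota y) t)) g
          = gmul (iota (gmul (ginv x) (phi x))) t)
    (h2 : forall h : H, gmul (gmul (ginv g) (iota h)) g
                        = iota (gmul (gmul (ginv x) h) x)) :
  exists k : H, K k /\ g = iota k.
Proof.
  destruct hK as [hKsub [k0 nk0]].
  pose proof (proj1 hG) as hi.
  destruct (conj_base_mem_base H K phi G iota t hKsub hphi hG k0 g nk0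
              (fun h => ex_intro _ _ (h2 h))) as [z ->].
  exists z. split; [|reflexivity].
  apply (tconj_base_K H K phi G iota t hKsub hphi hG z
           (gmul (ginv y) (gmul z (gmul (ginv x) (phi x))))).
  set (c := gmul (ginv x) (phi x)) in *.
  rewrite !hi, (homV _ _ iota hi).
  replace (iota c) with (gmul (gmul (gmul (ginv (iota z)) (gmul (iota y) t)) (iota z)) (ginv t))
    by (rewrite h1; gnorm; reflexivity).
  gnorm. reflexivity.
Qed.
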